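(* Let $S,T$ be disjoint finite sets with a total order $\prec$ on $S\cup T$ in which every element of $S$ precedes every element of $T$. Let $R\subseteq S\times T$ be a relation such that if $(s,t)\in R$, then $(s',t')\in R$ for all $s'\in S,t'\in T$ with $s\preceq s'\prec t'\preceq t$. Let $y:R\to\mathbb{R}_{\ge0}$ with $\gamma:=\sum_{(s,t)\in R}y_{s,t}>0$. Define $$s^*=\max_{\prec}\Big\{s\in S:\ \sum_{s'\succeq s}\ \sum_{t:(s',t)\in R}y_{s',t}\ge \gamma/2\Big\},\qquad t^*=\min_{\prec}\Big\{t\in T:\ \sum_{t'\preceq t}\ \sum_{s:(s,t')\in R}y_{s,t'}\ge\gamma/2\Big\},$$ and $\tilde S=\{s\in S: s\succeq s^*\}$, $\tilde T=\{t\in T: t\preceq t^*\}$. Then $\tilde S\times\tilde T\subseteq R$.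
   Context: $\preceq$ denotes the reflexive version of the total order $\prec$; $\max_\prec$ and $\min_\prec$ denote the largest and smallest element with respect to $\prec$. *)

From HB Require Import structures.
From mathcomp Require Import all_boot all_order all_algebra.
Set Implicit Arguments. Unset Strict Implicit. Unset Printing Implicit Defensive.
Import Order.TTheory GRing.Theory Num.Theory.
Local Open Scope order_scope.

Definition is_max_of (d : Order.disp_t) (X : finOrderType d) (A : {set X}) (x : X) :=
  x \in A /\ forall a, a \in A -> a <= x.
Definition is_min_of (d : Order.disp_t) (X : finOrderType d) (A : {set X}) (x : X) :=
  x \in A /\ forall a, a \in A -> x <= a.

From HB Require Import structures.
From mathcomp Require Import all_boot all_order all_algebra.
Import Order.TTheory GRing.Theory Num.Theory.

(* Write w(P) for the total y-weight of the pairs of R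
   satisfying P.  Since R is closed under moving the first coordinate up and
   the second one down, it suffices to show that the corner (sstar, tstar)
   lies in R.  If it did not, every (s, t) in R would satisfy sstar < s or
   t < tstar.  The pairs with sstar < s weigh < gamma/2: the smallest such
   first coordinate s0 exceeds sstar, the maximum of the threshold set, so its
   tail weight w(s0 <= s) is < gamma/2, and that tail is exactly the set of
   pairs with sstar < s.  Dually the pairs with t < tstar weigh < gamma/2.
   As y >= 0 these two classes cover R, whence gamma < gamma. *)

Set Implicit Arguments.
Unset Strict Implicit.
Local Open Scope ring_scope.

Section RelationSums.
Variables (d : Order.disp_t) (X : finOrderType d) (K : realFieldType).
Variables (S T : {set X}) (Rl : {set X * X}) (y : X -> X -> K).
Hypothesis Rl_sub : forall p, p \in Rl -> (p.1 \in S) && (p.2 \in T).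

Lemma sum_rows (P : pred X) :
  \sum_(s in S | P s) \sum_(t in T | (s, t) \in Rl) y s t =
  \sum_(p in Rl | P p.1) y p.1 p.2.
Proof.
rewrite pair_big_dep; apply: eq_bigl => [[a b]] /=.
case ab_in: ((a, b) \in Rl); last by rewrite !andbF.
by case/andP: (Rl_sub ab_in) => /= -> ->; rewrite andbT andbC.
Qed.

Lemma sum_cols (P : pred X) :
  \sum_(t in T | P t) \sum_(s in S | (s, t) \in Rl) y s t =
  \sum_(p in Rl | P p.2) y p.1 p.2.
Proof.
rewrite (exchange_big_dep (fun s => s \in S)) /=; last by move=> i j _ /andP[].
rewrite pair_big_dep; apply: eq_bigl => [[a b]] /=.
case ab_in: ((a, b) \in Rl); last by rewrite !andbF.
by case/andP: (Rl_sub ab_in) => /= -> ->; rewrite ?andbT.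
Qed.

End RelationSums.

(* Strict tail bound: if the closed tail {j | f i <= f j} starting at any
   index i with x < f i weighs less than c > 0, then so does the strict tail
   {j | x < f j}, since it equals the closed tail at its minimal element. *)
Lemma strict_tail_lt (d : Order.disp_t) (Y : orderType d) (I : finType)
    (K : realFieldType) (P : pred I) (f : I -> Y) (F : I -> K) (x : Y) (c : K) :
  0 < c ->
  (forall i, P i -> (x < f i)%O -> \sum_(j | P j && (f i <= f j)%O) F j < c) ->
  \sum_(j | P j && (x < f j)%O) F j < c.
Proof.
move=> c_gt0 closed_tail.
case: (pickP [pred j | P j && (x < f j)%O]) => [j0 j0_tail | no_tail]; last first.
  by rewrite big_pred0 // => j; have := no_tail j.
case: (arg_minP f j0_tail) => i /andP[Pi x_lt_fi] fi_min.
rewrite (eq_bigl (fun j => P j && (f i <= f j)%O)); first exact: closed_tail.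
move=> j /=; case Pj: (P j) => //=; apply/idP/idP => [x_lt_fj | fi_le_fj].
- by apply: fi_min; rewrite /= Pj.
- exact: lt_le_trans x_lt_fi fi_le_fj.
Qed.

Lemma sum_le_cover (I : finType) (K : realFieldType) (P Q1 Q2 : pred I)
    (F : I -> K) :
  (forall i, P i -> 0 <= F i) -> (forall i, P i -> Q1 i || Q2 i) ->
  \sum_(i | P i) F i <= \sum_(i | P i && Q1 i) F i + \sum_(i | P i && Q2 i) F i.
Proof.
move=> F_ge0 covered; rewrite (bigID Q1) /= lerD2l.
rewrite [leRHS]big_mkcond [leLHS]big_mkcond /=; apply: ler_sum => i _.
case Pi: (P i) => //=; have := covered i Pi.
by case: (Q1 i); case: (Q2 i) => //= _; apply: F_ge0.
Qed.

Theorem lemmaB2 (d : Order.disp_t) (X : finOrderType d) (K : realFieldType)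
  (S T : {set X}) (Rl : {set X * X}) (y : X -> X -> K)
  (sstar tstar : X) :
  [disjoint S & T] ->
  (forall s t, s \in S -> t \in T -> (s < t)%O) ->
  (forall p, p \in Rl -> (p.1 \in S) && (p.2 \in T)) ->
  (forall s t s' t', (s, t) \in Rl -> s' \in S -> t' \in T ->
     (s <= s')%O -> (s' < t')%O -> (t' <= t)%O -> (s', t') \in Rl) ->
  (forall p, p \in Rl -> (0 <= y p.1 p.2)%R) ->
  let gamma := (\sum_(p in Rl) y p.1 p.2)%R in
  (0 < gamma)%R ->
  is_max_of [set s in S | (gamma / 2 <=
      \sum_(s' in S | (s <= s')%O) \sum_(t in T | (s', t) \in Rl) y s' t)%R] sstar ->
  is_min_of [set t in T | (gamma / 2 <=
      \sum_(t' in T | (t' <= t)%O) \sum_(s in S | (s, t') \in Rl) y s t')%R] tstar ->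
  forall s t, s \in S -> (sstar <= s)%O -> t \in T -> (t <= tstar)%O -> (s, t) \in Rl.
Proof.
move=> _ S_lt_T Rl_sub Rl_closed y_ge0 gamma gamma_gt0 [sstar_in sstar_max]
  [tstar_in tstar_min] s t sS sstar_le_s tT t_le_tstar.
move: sstar_in tstar_in; rewrite !inE => /andP[sstarS _] /andP[tstarT _].
have corner_closed a b : (a, b) \in Rl -> (a <= sstar)%O -> (tstar <= b)%O ->
    (sstar, tstar) \in Rl.
  move=> ab_in le1 le2.
  exact: Rl_closed ab_in sstarS tstarT le1 (S_lt_T _ _ sstarS tstarT) le2.
suff corner_in : (sstar, tstar) \in Rl.
  exact: Rl_closed corner_in sS tT sstar_le_s (S_lt_T _ _ sS tT) t_le_tstar.
apply/negPn/negP => corner_out.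
have half_gt0 : 0 < gamma / 2 by rewrite divr_gt0.
have upper_small : \sum_(p in Rl | (sstar < p.1)%O) y p.1 p.2 < gamma / 2.
  apply: strict_tail_lt => // p p_in sstar_lt; rewrite -(sum_rows y Rl_sub) ltNge.
  apply/negP => heavy; have /andP[p1S _] := Rl_sub _ p_in.
  by have := sstar_max p.1; rewrite inE p1S heavy leNgt sstar_lt => /(_ isT).
have lower_small : \sum_(p in Rl | (p.2 < tstar)%O) y p.1 p.2 < gamma / 2.
  apply: (@strict_tail_lt _ X^d _ _ _ (fun p : X * X => p.2 : X^d)) => //.
  move=> p p_in; rewrite ltEdual => lt_tstar; rewrite -(sum_cols y Rl_sub) ltNge.
  apply/negP => heavy; have /andP[_ p2T] := Rl_sub _ p_in.
  by have := tstar_min p.2; rewrite inE p2T heavy leNgt lt_tstar => /(_ isT).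
have : gamma <= \sum_(p in Rl | (sstar < p.1)%O) y p.1 p.2 +
                \sum_(p in Rl | (p.2 < tstar)%O) y p.1 p.2.
  apply: sum_le_cover => // -[a b] ab_in; rewrite !ltNge -negb_and.
  apply/negP => /andP[le1 le2].
  exact: (negP corner_out) (corner_closed _ _ ab_in le1 le2).
by move/le_lt_trans/(_ (ltrD upper_small lower_small)); rewrite -splitr ltxx.
Qed.
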